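(* Given $r_1, \dots, r_n \in R_C$ and a finite $F_0 \subseteq K[X]_{\text{irr}}^{0 < C < \infty}$, one can write, for all $i \in \{1, \dots, n\}$, $$r_i = \rho_{F,i}[\theta] \circ \eta[\theta]^{-1} \circ \pi_{\text{Im}(F^C)} + \sum_{f \in F} \rho_{f,i}[\theta] \circ \pi_{\text{Ker}(f^C)},$$ where (1) $F \subseteq K[X]_{\text{irr}}^{0 < C < \infty}$ is finite with $F_0 \subseteq F$; (2) $\eta$ is a monic polynomial all of whose irreducible factors lie in $F \cup \{f \in K[X]_{\text{irr}} : C(f)=0\}$; (3) each $\rho_{F,i}$ has all irreducible factors in $F \cup \{f : C(f)=0\} \cup \{f : C(f)=\infty\}$, and $\gcd(\rho_{F,1}, \dots, \rho_{F,n}, \eta) = 1$; (4) the $\rho_{f,i}$ are polynomials with $\deg(\rho_{f,i}) < \deg(f^{C(f)})$.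
   Context: Let $K$ be a field and $K[X]_{\text{irr}}$ the set of monic irreducible polynomials over $K$. A kernel configuration $C$ is a function $C\colon K[X]_{\text{irr}} \to \mathbb{N}\cup\{\infty\}$ together with a degree $\deg(C)$ which is either $\infty$ (transcendental) or equal to $\sum_f \deg(f)\cdot C(f)$ (algebraic, with $\text{MiPo}(C)=\prod_f f^{C(f)}$). Write $f^C := f^{C(f)}$, $F^C := \prod_{f\in F} f^{C(f)}$ for finite $F$, and $K[X]_{\text{irr}}^{0<C<\infty} := \{f : 0 < C(f) < \infty\}$. For an endomorphism $\theta$ of a $K$-vector space $\mathbb{V}$ and $\rho=\sum_i (\rho)_i X^i$, $\rho[\theta] := \sum_i (\rho)_i\theta^i$. $\theta$ is a $C$-endomorphism if $\text{MiPo}(C)[\theta]=0$ (algebraic case) resp. $\text{Ker}(f^{C(f)}[\theta]) = \text{Ker}(f^{C(f)+1}[\theta])$ for all $f$ with $C(f)<\infty$ (transcendental case); it is $C$-image-complete if moreover $\text{Im}(f^{C(f)+1}[\theta]) = \text{Im}(f^{C(f)}[\theta])$ for all $f$ with $C(f)<\infty$. Then $\mathbb{V} = \text{Im}(F^C[\theta])\oplus\text{Ker}(F^C[\theta])$ for finite $F \subseteq K[X]_{\text{irr}}^{0<C<\infty}$, with canonical projections $\pi_{\text{Im}(F^C)}, \pi_{\text{Ker}(F^C)}$ (and $\pi_{\text{Ker}(f^C)} := \pi_{\text{Ker}(\{f\}^C)}$). For monic $\eta$ whose set $\text{Fac}(\eta)$ of irreducible factors satisfies $C(f)<\infty$ for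 all $f \in \text{Fac}(\eta)$, $\eta[\theta]^{-1}(x)$ is the unique $u \in \text{Im}(\text{Fac}(\eta)^C[\theta])$ with $\eta[\theta](u) = \pi_{\text{Im}(\text{Fac}(\eta)^C)}(x)$. $R_C$ is the commutative ring (under $+$, $\circ$) of endomorphisms, uniformly definable in the theory of $K$-vector spaces with a $C$-image-complete endomorphism $\theta$, generated by all $\rho[\theta]$, all $\pi_{\text{Im}(F^C)}$ and all such $\eta[\theta]^{-1}$; equality in $R_C$ means agreement in every such structure. *)

From HB Require Import structures.
From mathcomp Require Import all_boot all_order all_algebra.
From Stdlib Require Import ClassicalEpsilon.
Set Implicit Arguments. Unset Strict Implicit. Unset Printing Implicit Defensive.
Import Order.TTheory GRing.Theory Num.Theory.
Local Open Scope ring_scope.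

Section KernelConf.
Variable K : fieldType.

Definition mirr (f : {poly K}) : Prop := f \is monic /\ irreducible_poly f.

(* A kernel configuration: C : K[X]_irr -> N u {oo} (None = oo; values on
   non monic-irreducible polynomials are irrelevant), and deg(C) (None = oo). *)
Record kconf := KConf { Cval : {poly K} -> option nat; Cdeg : option nat }.

Definition Cn (C : kconf) (f : {poly K}) : nat := odflt 0%N (Cval C f).

Definition Csupport (C : kconf) (s : seq {poly K}) : Prop :=
  uniq s /\ forall f, f \in s <-> (mirr f /\ Cval C f <> Some 0%N).

Definition kconf_wf (C : kconf) : Prop :=
  match Cdeg C with
  | None => True
  | Some d => (forall f, mirr f -> Cval C f <> None) /\
      exists s, Csupport C s /\ d = (\sum_(f <- s) (size f).-1 * Cn C f)%N
  end.

Definition powC (C : kconf) (F : seq {poly K}) : {poly K} :=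
  \prod_(f <- F) f ^+ Cn C f.

Definition fin_sub_irr (C : kconf) (F : seq {poly K}) : Prop :=
  uniq F /\ forall f, f \in F -> mirr f /\ exists k, Cval C f = Some k.+1.

Definition Fac (eta : {poly K}) : seq {poly K} :=
  epsilon (inhabits [::])
    (fun s => uniq s /\ forall f, f \in s <-> (mirr f /\ f %| eta)).

Variable V : lmodType K.

Definition peval (p : {poly K}) (th : V -> V) (x : V) : V :=
  \sum_(i < size p) p`_i *: iter i th x.

Definition kerEq (p q : {poly K}) (th : V -> V) : Prop :=
  forall v, peval p th v = 0 <-> peval q th v = 0.
Definition imEq (p q : {poly K}) (th : V -> V) : Prop :=
  forall v, (exists w, peval p th w = v) <-> (exists w, peval q th w = v).

Definition C_endo (C : kconf) (th : V -> V) : Prop :=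
  match Cdeg C with
  | Some _ => forall s, Csupport C s -> forall v, peval (powC C s) th v = 0
  | None => forall f k, mirr f -> Cval C f = Some k ->
              kerEq (f ^+ k) (f ^+ k.+1) th
  end.

Definition C_img_complete (C : kconf) (th : V -> V) : Prop :=
  C_endo C th /\
  forall f k, mirr f -> Cval C f = Some k -> imEq (f ^+ k.+1) (f ^+ k) th.

Definition proj_im (P : {poly K}) (th : V -> V) (x : V) : V :=
  epsilon (inhabits 0)
    (fun u => (exists w, peval P th w = u) /\ peval P th (x - u) = 0).

Definition pi_Im (C : kconf) (F : seq {poly K}) (th : V -> V) (x : V) : V :=
  proj_im (powC C F) th x.

Definition pi_Ker (C : kconf) (F : seq {poly K}) (th : V -> V) (x : V) : V :=
  x - pi_Im C F th x.

Definition inv_eval (C : kconf) (eta : {poly K}) (th : V -> V) (x : V) : V :=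
  epsilon (inhabits 0)
    (fun u => (exists w, peval (powC C (Fac eta)) th w = u) /\
              peval eta th u = pi_Im C (Fac eta) th x).

End KernelConf.

(* Syntactic generators of R_C, closed under + and composition *)
Inductive rterm (K : fieldType) : Type :=
| RPoly of {poly K}
| RProjIm of seq {poly K}
| RInv of {poly K}
| RAdd of rterm K & rterm K
| RComp of rterm K & rterm K.

Fixpoint rvalid (K : fieldType) (C : kconf K) (t : rterm K) : Prop :=
  match t with
  | RPoly _ => True
  | RProjIm F => fin_sub_irr C F
  | RInv eta => eta \is monic /\
      (forall f, mirr f -> f %| eta -> exists k, Cval C f = Some k)
  | RAdd t1 t2 => rvalid C t1 /\ rvalid C t2
  | RComp t1 t2 => rvalid C t1 /\ rvalid C t2
  end.

Fixpoint rinterp (K : fieldType) (C : kconf K) (V : lmodType K)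
    (th : V -> V) (t : rterm K) : V -> V :=
  match t with
  | RPoly p => peval p th
  | RProjIm F => pi_Im C F th
  | RInv eta => inv_eval C eta th
  | RAdd t1 t2 => fun x => rinterp C th t1 x + rinterp C th t2 x
  | RComp t1 t2 => fun x => rinterp C th t1 (rinterp C th t2 x)
  end.

From HB Require Import structures.
From mathcomp Require Import all_boot all_order all_algebra ring.
From Stdlib Require Import ClassicalEpsilon Classical.
Set Implicit Arguments. Unset Strict Implicit. Unset Printing Implicit Defensive.
Import GRing.Theory.
Local Open Scope ring_scope.

(* Take F ⊇ F0 finite, containing every irreducible f with 0 < C(f) < ∞ that occurs in some
   r_i or divides the numerator of the fraction attached to some r_i below. Then
   V = W ⊕ N with W = Im F^C[θ] and N = Ker F^C[θ], and every monic polynomial whose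
   irreducible factors lie in F or have C = 0 acts bijectively on W. By induction on terms,
   each r_i acts on W as a_i[θ] ∘ b_i[θ]^{-1} and on N as a polynomial s_i[θ]. Bringing
   the fractions a_i/b_i to a common denominator η in lowest terms gives the ρ_{F,i}; and N
   is the direct sum of the Ker f^C[θ] (Chinese remainder theorem), on each of which s_i[θ]
   only depends on s_i mod f^C(f). *)

(** * Polynomials in θ and Fitting decompositions *)

Section PolyEval.
Variables (K : fieldType) (V : lmodType K) (th : {linear V -> V}).
Implicit Types p q : {poly K}.
Local Notation pe p := (peval p th).

Lemma peval_is_linear p : linear (pe p).
Proof.
move=> a x y; rewrite /peval scaler_sumr -big_split /=; apply: eq_bigr => i _.
have iterL k : linear (iter k th) by elim: k => // k IH b u v /=; rewrite IH linearP.
by rewrite iterL scalerDr !scalerA mulrC.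
Qed.

HB.instance Definition _ p :=
  GRing.isLinear.Build K V V *:%R (pe p) (peval_is_linear p).

Lemma peval_widen p m x : (size p <= m)%N ->
  pe p x = \sum_(i < m) p`_i *: iter i th x.
Proof.
move=> hm; rewrite /peval (big_ord_widen m (fun i => p`_i *: iter i th x) hm).
rewrite big_mkcond /=; apply: eq_bigr => i _.
by case: ifP => // /negbT; rewrite -leqNgt => /(nth_default 0) ->; rewrite scale0r.
Qed.

Lemma pevalD p q x : pe (p + q) x = pe p x + pe q x.
Proof.
rewrite !(@peval_widen _ (maxn (size p) (size q))) ?leq_maxl ?leq_maxr ?size_polyD //.
by rewrite -big_split; apply: eq_bigr => i _; rewrite coefD scalerDl.
Qed.

Lemma pevalZ c p x : pe (c *: p) x = c *: pe p x.
Proof.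
rewrite !(@peval_widen _ (size p)) ?size_scale_leq // scaler_sumr.
by apply: eq_bigr => i _; rewrite coefZ scalerA.
Qed.

Lemma pevalC c x : pe c%:P x = c *: x.
Proof. by rewrite (@peval_widen _ 1) ?size_polyC ?leq_b1 // big_ord1 coefC. Qed.

Lemma peval1 x : pe 1 x = x.
Proof. by rewrite pevalC scale1r. Qed.

Lemma pevalN p x : pe (- p) x = - pe p x.
Proof. by rewrite -(scaleN1r p) pevalZ scaleN1r. Qed.

Lemma peval0 x : pe 0 x = 0.
Proof. by rewrite /peval size_poly0 big_ord0. Qed.

Lemma peval_th p x : pe p (th x) = th (pe p x).
Proof.
rewrite /peval linear_sum; apply: eq_bigr => i _.
by rewrite linearZ /= -iterSr -iterS.
Qed.

Lemma pevalMX p x : pe (p * 'X) x = pe p (th x).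
Proof.
rewrite (@peval_widen _ (size p).+1); last first.
  by have [->|pn0] := eqVneq p 0; [rewrite mul0r size_poly0|rewrite size_mulX].
rewrite big_ord_recl coefMX eqxx scale0r add0r /peval.
by apply: eq_bigr => i _; rewrite coefMX /= add0n -iterS iterSr.
Qed.

Lemma pevalM p q x : pe (p * q) x = pe p (pe q x).
Proof.
elim/poly_ind: p x => [|p c IH] x; first by rewrite mul0r !peval0.
rewrite mulrDl -mulrA [_ * q]mulrC mulrA mul_polyC pevalD pevalZ pevalMX IH.
by rewrite pevalD pevalMX pevalC -peval_th.
Qed.

Lemma peval_comm p q x : pe p (pe q x) = pe q (pe p x).
Proof. by rewrite -!pevalM mulrC. Qed.

End PolyEval.

Section Fitting.
Variables (K : fieldType) (V : lmodType K) (th : {linear V -> V}).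
Implicit Types p q P Q : {poly K}.
Local Notation pe p := (peval p th).

Definition inIm P (y : V) := exists w, pe P w = y.

(* Equal kernels and images of [P[θ]] and [P[θ]^2] give [V = Im P[θ] ⊕ Ker P[θ]]. *)
Definition fitting P :=
  (forall x, pe (P * P) x = 0 -> pe P x = 0) /\
  (forall x, exists y, pe P x = pe (P * P) y).

Lemma inIm_peval P p y : inIm P y -> inIm P (pe p y).
Proof. by case=> w <-; exists (pe p w); rewrite peval_comm. Qed.

Lemma inImD P y z : inIm P y -> inIm P z -> inIm P (y + z).
Proof. by case=> w <- [w' <-]; exists (w + w'); rewrite linearD. Qed.

Lemma inImN P y : inIm P y -> inIm P (- y).
Proof. by case=> w <-; exists (- w); rewrite linearN. Qed.

Lemma inImB P y z : inIm P y -> inIm P z -> inIm P (y - z).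
Proof. by case=> w <- [w' <-]; exists (w - w'); rewrite linearB. Qed.

Lemma inIm_dvd P Q y : P %| Q -> inIm Q y -> inIm P y.
Proof. by case/dvdpP=> R -> [w <-]; exists (pe R w); rewrite -pevalM mulrC. Qed.

Lemma fitting1 : fitting 1.
Proof. by split=> x; rewrite mulr1 //; exists x. Qed.

Lemma fittingM p q : fitting p -> fitting q -> fitting (p * q).
Proof.
move=> [kp ip] [kq iq]; split=> x.
  rewrite mulrACA => h.
  have h1 : pe p (pe (q * q) x) = 0 by apply: kp; rewrite -pevalM.
  by rewrite pevalM peval_comm; apply: kq; rewrite peval_comm.
have [y ey] := iq x; have [z ez] := ip y.
exists z; rewrite [LHS]pevalM ey peval_comm ez -pevalM; congr (peval _ _ z).
by rewrite [RHS]mulrACA mulrC.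
Qed.

Lemma fitting_exp f c :
  (forall x, pe (f ^+ c.+1) x = 0 -> pe (f ^+ c) x = 0) ->
  (forall x, exists y, pe (f ^+ c) x = pe (f ^+ c.+1) y) -> fitting (f ^+ c).
Proof.
move=> hk hi; split=> x; rewrite -exprD.
  suff ker m y : pe (f ^+ (c + m)) y = 0 -> pe (f ^+ c) y = 0 by exact: ker.
  elim: m y => [|m IH] y; first by rewrite addn0.
  by rewrite addnS -addSn exprD pevalM => /hk; rewrite -pevalM -exprD; exact: IH.
suff im m y : exists z, pe (f ^+ c) y = pe (f ^+ (c + m)) z by exact: im.
elim: m y => [|m IH] y; first by exists y; rewrite addn0.
have [z ez] := IH y; have [u eu] := hi z.
by exists u; rewrite ez addnS -addSn addnC exprD pevalM eu -pevalM -exprD addnC.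
Qed.

Section Projection.
Variable P : {poly K}.
Hypothesis fitP : fitting P.

Lemma fitting_Im_Ker0 y : inIm P y -> pe P y = 0 -> y = 0.
Proof. by case: fitP => kerP _ [w <-]; rewrite -pevalM => /kerP. Qed.

Lemma proj_imP x : inIm P (proj_im P th x) /\ pe P (x - proj_im P th x) = 0.
Proof.
apply: (epsilon_spec (inhabits 0) (fun u => inIm P u /\ pe P (x - u) = 0)).
have [y ey] := fitP.2 x; exists (pe P y); split; first by exists y.
by rewrite linearB /= -pevalM -ey subrr.
Qed.

Lemma proj_im_unique x u : inIm P u -> pe P (x - u) = 0 -> proj_im P th x = u.
Proof.
move=> Pu Pxu; have [Ppx Pxpx] := proj_imP x; apply/eqP; rewrite -subr_eq0.
apply/eqP/fitting_Im_Ker0; first exact: inImB.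
have -> : proj_im P th x - u = (x - u) - (x - proj_im P th x).
  by rewrite opprB [RHS]addrC addrA subrK.
by rewrite linearB /= Pxu Pxpx subrr.
Qed.

Lemma proj_im_id y : inIm P y -> proj_im P th y = y.
Proof. by move=> Py; apply: proj_im_unique => //; rewrite subrr linear0. Qed.

Lemma proj_im_ker y : pe P y = 0 -> proj_im P th y = 0.
Proof. by move=> Py; apply: proj_im_unique; [exists 0; rewrite linear0|rewrite subr0]. Qed.

Lemma proj_imD x y : proj_im P th (x + y) = proj_im P th x + proj_im P th y.
Proof.
have [Px kx] := proj_imP x; have [Py ky] := proj_imP y.
apply: proj_im_unique; first exact: inImD.
by rewrite opprD addrACA linearD /= kx ky addr0.
Qed.
End Projection.
End Fitting.

(** * Monic irreducible factors *)

Section MonicIrreducible.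
Variable K : fieldType.
Implicit Types p q e f g : {poly K}.

Lemma mirr_neq0 f : mirr f -> f != 0.
Proof. by case=> _ /irredp_neq0. Qed.

Lemma mirr_coprime f g : mirr f -> mirr g -> f != g -> coprimep f g.
Proof.
move=> [mf irrf] [mg irrg] fg; rewrite irreducible_poly_coprime //; apply/negP => gf.
have [f1|] := irredp_XsubCP irrg gf; first by move: irrf.1; rewrite (eqp_size f1) size_poly1.
by rewrite eqp_monic // (negPf fg).
Qed.

Lemma mirr_dvdM f p q : mirr f -> f %| p * q -> f %| p \/ f %| q.
Proof.
move=> [_ irrf] fpq; have [fp|fNp] := boolP (f %| p); first by left.
by right; rewrite -(Gauss_dvdpr _ (_ : coprimep f p)) ?irreducible_poly_coprime.
Qed.

Lemma coprimep_prodr (I : eqType) (s : seq I) (P : pred I) (F : I -> {poly K}) p :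
  (forall i, i \in s -> P i -> coprimep p (F i)) ->
  coprimep p (\prod_(i <- s | P i) F i).
Proof.
move=> cop; rewrite big_seq_cond; apply: (big_ind (coprimep p)) => [|a b|i /andP[]].
- exact: coprimep1.
- by rewrite coprimepMr => -> ->.
- exact: cop.
Qed.

Lemma exists_mirr_dvdp p : (1 < size p)%N -> exists f, mirr f /\ f %| p.
Proof.
elim: {p}(size p) {-2}p (leqnn (size p)) => [|n IH] p sp p1.
  by move: (leq_trans p1 sp).
have p0 : p != 0 by rewrite -size_poly_gt0 (ltn_trans _ p1).
have [irrp|Nirrp] := classic (irreducible_poly p).
  exists ((lead_coef p)^-1 *: p); split; last by rewrite dvdpZl // invr_eq0 lead_coef_eq0.
  have lp0 : (lead_coef p)^-1 != 0 by rewrite invr_eq0 lead_coef_eq0.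
  have pp := eqp_scale p lp0.
  split; first by rewrite monicE lead_coefZ mulVf // lead_coef_eq0.
  split=> [|q q1]; first by rewrite (eqp_size pp); exact: irrp.1.
  by rewrite (eqp_dvdr _ pp) => /(irrp _ q1)/eqp_trans; apply; rewrite eqp_sym.
have [q [q1 qp Nqp]] : exists q, [/\ size q != 1, q %| p & ~~ (q %= p)].
  apply: NNPP => Nex; apply: Nirrp; split => // q q1 qp.
  by apply/negbNE/negP => Nqp; apply: Nex; exists q.
have q0 : q != 0 by apply: contraTneq qp => ->; rewrite dvd0p.
have [f [mf fq]] : exists f, mirr f /\ f %| q.
  apply: IH; last by move: q1 q0; rewrite -size_poly_gt0; case: (size q) => [|[]].
  rewrite -ltnS (leq_trans _ sp) // ltn_neqAle dvdp_leq // andbT.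
  by rewrite dvdp_size_eqp.
by exists f; split => //; apply: dvdp_trans qp.
Qed.

Lemma size_divp_mirr e f : mirr f -> e != 0 -> (size (e %/ f)%R < size e)%N.
Proof.
move=> mf e0; have [_ [f1 _]] := mf.
rewrite size_divp ?(mirr_neq0 mf) // ltn_subrL size_poly_gt0 e0 andbT.
by rewrite -ltnS prednK // ltnW.
Qed.

Lemma poly_mirr_ind (P : {poly K} -> Prop) :
  (forall c, c != 0 -> P c%:P) ->
  (forall f e, mirr f -> e != 0 -> P e -> P (e * f)) ->
  forall e, e != 0 -> P e.
Proof.
move=> PC PM e; elim: {e}(size e) {-2}e (leqnn (size e)) => [|n IH] e se e0.
  by move: se; rewrite leqn0 size_poly_eq0 (negPf e0).
have [e1|e1] := leqP (size e) 1.
  by rewrite (size1_polyC e1); apply: PC; rewrite -polyC_eq0 -(size1_polyC e1).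
have [f [mf fe]] := exists_mirr_dvdp e1.
have f0 := mirr_neq0 mf; have ef : e %/ f * f = e by rewrite divpK.
have e'0 : e %/ f != 0 by apply: contraTneq e0 => e'0; rewrite -ef e'0 mul0r eqxx.
rewrite -ef; apply: PM => //; apply: IH => //.
by rewrite -ltnS (leq_trans _ se) // size_divp_mirr.
Qed.

Lemma Fac_spec p : p != 0 ->
  uniq (Fac p) /\ forall f, f \in Fac p <-> (mirr f /\ f %| p).
Proof.
move=> p0; apply: (epsilon_spec (inhabits [::])
  (fun s => uniq s /\ forall f, f \in s <-> (mirr f /\ f %| p))).
move: p p0; apply: poly_mirr_ind => [c c0|f e mf e0 [s [us sP]]].
  exists [::]; split => // f; split => // -[[_ [f1 _]] fc].
  have cP0 : c%:P != 0 by rewrite polyC_eq0.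
  by move: (dvdp_leq cP0 fc); rewrite size_polyC c0 leqNgt f1.
exists (undup (f :: s)); split => [|g]; first exact: undup_uniq.
rewrite mem_undup in_cons; split => [/orP[/eqP->|/sP[mg ge]]|[mg gef]].
- by split=> //; rewrite dvdp_mull.
- by split=> //; rewrite dvdp_mulr.
have [->//|gf /=] := eqVneq g f.
by apply/sP; rewrite -(Gauss_dvdpl _ (mirr_coprime mg mf gf)).
Qed.

End MonicIrreducible.

Section PowC.
Variables (K : fieldType) (C : kconf K).
Implicit Types p q e f g : {poly K}.

Lemma Cn_some f c : Cval C f = Some c -> Cn C f = c.
Proof. by rewrite /Cn => ->. Qed.

Lemma dvdp_powC s f : f \in s -> f ^+ Cn C f %| powC C s.
Proof. by move=> fs; rewrite /powC (big_rem _ fs) dvdp_mulr. Qed.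

Lemma powC_split s F : uniq s -> uniq F ->
  (forall g, g \in s -> Cn C g != 0%N -> g \in F) ->
  powC C F = powC C s * \prod_(g <- F | g \notin s) g ^+ Cn C g.
Proof.
move=> us uF sF; rewrite /powC (bigID (mem s)) /=; congr (_ * _).
have -> : \prod_(g <- s) g ^+ Cn C g = \prod_(g <- s | g \in F) g ^+ Cn C g.
  rewrite [RHS]big_mkcond; apply: eq_big_seq => g gs /=; case: ifP => // /negbT gF.
  by move: (contraNN (sF g gs) gF); rewrite negbK => /eqP ->; rewrite expr0.
rewrite -big_filter -[RHS]big_filter; apply: perm_big; apply: uniq_perm; rewrite ?filter_uniq //.
by move=> g; rewrite !mem_filter andbC.
Qed.

Lemma coprimep_powC_compl s F : (forall g, g \in s -> mirr g) -> (forall g, g \in F -> mirr g) ->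
  coprimep (powC C s) (\prod_(g <- F | g \notin s) g ^+ Cn C g).
Proof.
move=> ms mF; apply: coprimep_prodr => g gF gs; rewrite coprimep_sym.
apply: coprimep_prodr => f fs _; apply/coprimep_expl/coprimep_expr.
by apply: mirr_coprime; [exact: mF|exact: ms|apply: contraNneq gs => ->].
Qed.

Lemma powC_dvd s F : uniq s -> uniq F ->
  (forall g, g \in s -> Cn C g != 0%N -> g \in F) -> powC C s %| powC C F.
Proof. by move=> us uF sF; rewrite (powC_split us uF sF) dvdp_mulr. Qed.

Lemma powC_support_factor s f c : Csupport C s -> mirr f -> Cval C f = Some c ->
  exists2 R, powC C s = f ^+ c * R & coprimep f R.
Proof.
move=> [us sP] mf fc; have ms g : g \in s -> mirr g by move/sP=> [].
have [fs|fNs] := boolP (f \in s).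
  exists (\prod_(g <- rem f s) g ^+ Cn C g); first by rewrite /powC (big_rem _ fs) (Cn_some fc).
  apply: coprimep_prodr => g gs _; apply/coprimep_expr/mirr_coprime => //.
    exact/ms/(mem_rem gs).
  by apply: contraTneq gs => <-; rewrite mem_rem_uniqF.
have c0 : c = 0%N by apply: NNPP => c0; move/negP: fNs; apply; apply/sP; rewrite fc; split=> // -[].
exists (powC C s); first by rewrite c0 expr0 mul1r.
apply: coprimep_prodr => g gs _; apply/coprimep_expr/mirr_coprime => //; first exact: ms.
by apply: contraNneq fNs => ->.
Qed.

End PowC.

(** * C-image-complete endomorphisms *)

Section CEndomorphism.
Variables (K : fieldType) (C : kconf K) (V : lmodType K) (th : {linear V -> V}).
Hypotheses (wfC : kconf_wf C) (thC : C_img_complete C th).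
Implicit Types p q e f g Q : {poly K}.
Local Notation pe p := (peval p th).

Lemma C_ker_stable f c : mirr f -> Cval C f = Some c ->
  forall x, pe (f ^+ c.+1) x = 0 -> pe (f ^+ c) x = 0.
Proof.
move=> mf fc x; case: thC => + _; move: wfC; rewrite /C_endo /kconf_wf.
case: (Cdeg C) => [d [_ [s [sC _]]] thMiPo|]; last by move=> _ /(_ f c mf fc x) [].
(* From u f + v R = 1 and f^c R = MiPo(C): f^c[θ] x = u[θ] f^(c+1)[θ] x + v[θ] MiPo(C)[θ] x. *)
have [R MiPoE fR] := powC_support_factor sC mf fc.
have [[u v] /= uv] := Bezout_eq1_coprimepP _ _ fR.
move=> fx; have ffx : pe f (pe (f ^+ c) x) = 0 by rewrite -pevalM -exprS.
have Rfx : pe R (pe (f ^+ c) x) = 0 by rewrite -pevalM mulrC -MiPoE thMiPo.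
by rewrite -[pe (f ^+ c) x](peval1 th) -uv pevalD !pevalM ffx Rfx !linear0 addr0.
Qed.

Lemma C_im_stable f c : mirr f -> Cval C f = Some c ->
  forall x, exists y, pe (f ^+ c) x = pe (f ^+ c.+1) y.
Proof.
move=> mf fc x; case: thC => _ /(_ f c mf fc (pe (f ^+ c) x)) [_ im].
by have [y ey] := im (ex_intro _ x erefl); exists y.
Qed.

Lemma fitting_powC s : (forall f, f \in s -> mirr f /\ exists c, Cval C f = Some c) ->
  fitting th (powC C s).
Proof.
move=> sC; rewrite /powC big_seq; apply: (big_ind (fitting th)) => [|p q|f].
- exact: fitting1.
- exact: fittingM.
case/sC=> mf [c fc]; rewrite (Cn_some fc).
by apply: fitting_exp; [apply: C_ker_stable|apply: C_im_stable].
Qed.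

Definition Cpart_dvd e Q := forall f, mirr f -> f %| e ->
  exists2 c, Cval C f = Some c & f ^+ c %| Q.

Lemma Cpart_dvd_trans e e' Q : e' %| e -> Cpart_dvd e Q -> Cpart_dvd e' Q.
Proof. by move=> e'e eQ f mf fe'; apply: eQ => //; apply: dvdp_trans e'e. Qed.

Lemma Cpart_dvd_mirr e f Q : mirr f -> Cpart_dvd (e * f) Q ->
  exists2 c, Cval C f = Some c & f ^+ c %| Q.
Proof. by move=> mf /(_ f mf); apply; rewrite dvdp_mull. Qed.

Lemma peval_Im_inj e Q : e != 0 -> Cpart_dvd e Q ->
  forall y, inIm th Q y -> pe e y = 0 -> y = 0.
Proof.
move: e; apply: poly_mirr_ind => [c c0|f e mf e0 IH] eQ y Qy.
  by rewrite pevalC => /eqP; rewrite scaler_eq0 (negPf c0) => /eqP.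
have [c fc fcQ] := Cpart_dvd_mirr mf eQ.
rewrite pevalM => /IH fy0; have {}fy0 : pe f y = 0.
  by apply: fy0; [apply: Cpart_dvd_trans eQ; rewrite dvdp_mulr|apply: inIm_peval].
have [w wy] := inIm_dvd fcQ Qy; rewrite -wy in fy0 *.
by apply: (C_ker_stable mf fc); rewrite exprS pevalM.
Qed.

Lemma peval_Im_onto e Q : e != 0 -> Cpart_dvd e Q ->
  forall y, inIm th Q y -> exists2 u, inIm th Q u & pe e u = y.
Proof.
move: e; apply: poly_mirr_ind => [c c0|f e mf e0 IH] eQ y Qy.
  exists (c^-1 *: y); last by rewrite pevalC scalerA mulfV // scale1r.
  by case: Qy => w <-; exists (c^-1 *: w); rewrite linearZ.
have [u [w <-] <-] := IH (Cpart_dvd_trans (dvdp_mulr _ (dvdpp e)) eQ) y Qy.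
have [c fc /dvdpP [R QE]] := Cpart_dvd_mirr mf eQ.
have [z fcwz] := C_im_stable mf fc w.
exists (pe Q z); first by exists z.
rewrite QE [in RHS]pevalM fcwz -!pevalM exprS.
by rewrite -!mulrA [f * _]mulrCA.
Qed.

Lemma inv_eval_unique e x u : e \is monic ->
  (forall f, mirr f -> f %| e -> exists k, Cval C f = Some k) ->
  inIm th (powC C (Fac e)) u -> pe e u = pi_Im C (Fac e) th x ->
  inv_eval C e th x = u.
Proof.
move=> me eC Fu eu; have e0 := monic_neq0 me; have [_ FacP] := Fac_spec e0.
have eFac : Cpart_dvd e (powC C (Fac e)).
  move=> f mf fe; have [k fk] := eC f mf fe; exists k => //.
  by rewrite -(Cn_some fk) dvdp_powC //; apply/FacP.
rewrite /inv_eval; set Inv := fun u => _ /\ _.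
have [Fv ev] : Inv (epsilon (inhabits 0) Inv) by apply: epsilon_spec; exists u.
apply/eqP; rewrite -subr_eq0; apply/eqP/(peval_Im_inj e0 eFac); first exact: inImB.
by rewrite linearB /= ev eu subrr.
Qed.

End CEndomorphism.

Section Admissible.
Variables (K : fieldType) (C : kconf K) (F : seq {poly K}).
Implicit Types b e f : {poly K}.

Definition admissible b := b \is monic /\
  forall f, mirr f -> f %| b -> f \in F \/ Cval C f = Some 0%N.

Lemma admissible1 : admissible 1.
Proof. by split=> [|f [_ [f1 _]]]; rewrite ?monic1 // dvdp1 => /eqP fE; rewrite fE in f1. Qed.

Lemma admissibleM b e : admissible b -> admissible e -> admissible (b * e).
Proof.
move=> [mb bF] [me eF]; split=> [|f mf /(mirr_dvdM mf) [/(bF _ mf)|/(eF _ mf)]] //.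
by rewrite monicMl.
Qed.

Lemma admissible_divp b f : admissible b -> mirr f -> f %| b -> admissible (b %/ f).
Proof.
move=> [mb bF] mf fb; have bfE : b %/ f * f = b by rewrite divpK.
split=> [|g mg gb]; first by rewrite -(monicMr _ mf.1) bfE.
by apply: bF => //; rewrite -bfE; apply: dvdp_mulr.
Qed.

End Admissible.

Section Decomposition.
Variables (K : fieldType) (C : kconf K) (V : lmodType K) (th : {linear V -> V}).
Variable F : seq {poly K}.
Hypotheses (wfC : kconf_wf C) (thC : C_img_complete C th) (FC : fin_sub_irr C F).
Implicit Types p q a b e f g : {poly K}.
Local Notation pe p := (peval p th).
Local Notation P := (powC C F).
Local Notation W := (inIm th P).
Local Notation piW x := (pi_Im C F th x).
Local Notation inv b y := (inv_eval C b th y).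
Local Notation adm := (admissible C F).

Lemma fitting_powC_F : fitting th P.
Proof. by apply: fitting_powC => // f /FC.2 [mf [k fk]]; split=> //; exists k.+1. Qed.

Lemma pi_Im_in x : W (piW x).
Proof. exact: (proj_imP fitting_powC_F x).1. Qed.

Lemma pi_Im_ker x : pe P (x - piW x) = 0.
Proof. exact: (proj_imP fitting_powC_F x).2. Qed.

Lemma pi_Im_unique w k : W w -> pe P k = 0 -> piW (w + k) = w.
Proof. by move=> Ww k0; apply: (proj_im_unique fitting_powC_F) Ww _; rewrite addrC addKr. Qed.

Lemma admissible_Cpart b : adm b -> Cpart_dvd C b P.
Proof.
move=> [_ bF] f mf fb; have [fF|f0] := bF f mf fb; last by exists 0%N; rewrite ?expr0 ?dvd1p.
have [_ [k fk]] := FC.2 f fF; exists k.+1 => //.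
by rewrite -(Cn_some fk) dvdp_powC.
Qed.

Lemma admissible_finite b : adm b ->
  forall f, mirr f -> f %| b -> exists k, Cval C f = Some k.
Proof. by move=> /admissible_Cpart bF f mf fb; have [k fk _] := bF f mf fb; exists k. Qed.

Lemma inv_evalP b y : adm b -> W y -> W (inv b y) /\ pe b (inv b y) = y.
Proof.
move=> bF Wy; have b0 := monic_neq0 bF.1; have [uFac FacP] := Fac_spec b0.
have [u Wu bu] := peval_Im_onto thC b0 (admissible_Cpart bF) Wy.
suff -> : inv b y = u by [].
have FacF : powC C (Fac b) %| P.
  apply: powC_dvd => // [|g /FacP [mg gb]]; first exact: FC.1.
  by case: (bF.2 g mg gb) => // /Cn_some ->.
apply: inv_eval_unique => //; first exact: bF.1.
- exact: admissible_finite.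
- exact: inIm_dvd Wu.
rewrite bu /pi_Im proj_im_id //; last exact: inIm_dvd Wy.
apply: fitting_powC => // g /FacP [mg gb]; split=> //; exact: admissible_finite bF g mg gb.
Qed.

Lemma inv_eval_W b y u : adm b -> W y -> W u -> pe b u = y -> inv b y = u.
Proof.
move=> bF Wy Wu buy; have [Wv bv] := inv_evalP bF Wy.
apply/eqP; rewrite -subr_eq0; apply/eqP.
apply: (peval_Im_inj wfC thC (monic_neq0 bF.1) (admissible_Cpart bF)); first exact: inImB.
by rewrite linearB /= bv buy subrr.
Qed.

Lemma inv_eval1 y : W y -> inv 1 y = y.
Proof. by move=> Wy; apply: inv_eval_W => //; [exact: admissible1|rewrite peval1]. Qed.

Lemma inv_evalM_l b1 b2 y : adm b1 -> adm b2 -> W y ->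
  inv b1 y = pe b2 (inv (b1 * b2) y).
Proof.
move=> b1F b2F Wy; have [Wu bu] := inv_evalP (admissibleM b1F b2F) Wy.
by apply: (inv_eval_W b1F Wy (inIm_peval _ Wu)); rewrite -pevalM.
Qed.

Lemma inv_evalM_r b1 b2 y : adm b1 -> adm b2 -> W y ->
  inv b2 y = pe b1 (inv (b1 * b2) y).
Proof. by move=> b1F b2F Wy; rewrite mulrC; apply: inv_evalM_l. Qed.

Lemma inv_evalD a1 b1 a2 b2 y : adm b1 -> adm b2 -> W y ->
  pe a1 (inv b1 y) + pe a2 (inv b2 y) = pe (a1 * b2 + a2 * b1) (inv (b1 * b2) y).
Proof.
move=> b1F b2F Wy; rewrite (inv_evalM_l b1F b2F Wy) (inv_evalM_r b1F b2F Wy).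
by rewrite pevalD !pevalM.
Qed.

Lemma inv_eval_comp a1 b1 a2 b2 y : adm b1 -> adm b2 -> W y ->
  pe a1 (inv b1 (pe a2 (inv b2 y))) = pe (a1 * a2) (inv (b1 * b2) y).
Proof.
move=> b1F b2F Wy; have [Wu _] := inv_evalP (admissibleM b1F b2F) Wy.
rewrite (inv_evalM_r b1F b2F Wy) peval_comm pevalM.
by rewrite (inv_eval_W b1F _ (inIm_peval a2 Wu) erefl) //; apply/inIm_peval/inIm_peval.
Qed.

Lemma inv_eval_cross a b A E y : adm b -> adm E -> a * E = A * b -> W y ->
  pe a (inv b y) = pe A (inv E y).
Proof.
move=> bF EF aEAb Wy.
by rewrite (inv_evalM_l bF EF Wy) (inv_evalM_r bF EF Wy) -!pevalM aEAb.
Qed.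

Definition normal_form (r : V -> V) a b s :=
  forall x, r x = pe a (inv b (piW x)) + pe s (x - piW x).

Lemma normal_form_peval p : normal_form (pe p) p 1 p.
Proof.
move=> x; have xE : x = piW x + (x - piW x) by rewrite addrC subrK.
by rewrite (inv_eval1 (pi_Im_in x)) {1}xE linearD.
Qed.

Lemma normal_form_split r a b s x : adm b -> normal_form r a b s ->
  piW (r x) = pe a (inv b (piW x)) /\ r x - piW (r x) = pe s (x - piW x).
Proof.
move=> bF rE; have [Wu _] := inv_evalP bF (pi_Im_in x).
have piWE : piW (r x) = pe a (inv b (piW x)).
  rewrite rE pi_Im_unique //; first exact: inIm_peval.
  by rewrite peval_comm pi_Im_ker // linear0.
by rewrite piWE rE addrC addKr.
Qed.

Lemma normal_formD r1 r2 a1 b1 s1 a2 b2 s2 : adm b1 -> adm b2 ->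
  normal_form r1 a1 b1 s1 -> normal_form r2 a2 b2 s2 ->
  normal_form (fun x => r1 x + r2 x) (a1 * b2 + a2 * b1) (b1 * b2) (s1 + s2).
Proof.
move=> b1F b2F r1E r2E x; rewrite r1E r2E pevalD addrACA.
by rewrite inv_evalD //; apply: pi_Im_in.
Qed.

Lemma normal_form_comp r1 r2 a1 b1 s1 a2 b2 s2 : adm b1 -> adm b2 ->
  normal_form r1 a1 b1 s1 -> normal_form r2 a2 b2 s2 ->
  normal_form (fun x => r1 (r2 x)) (a1 * a2) (b1 * b2) (s1 * s2).
Proof.
move=> b1F b2F r1E r2E x; have [piWE kerE] := normal_form_split x b2F r2E.
by rewrite r1E kerE piWE inv_eval_comp ?pevalM //; apply: pi_Im_in.
Qed.

Section Bezout.
Variables (Q R a b : {poly K}).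
Hypotheses (QRE : Q * R = P) (abQR : a * Q + b * R = 1) (fitQ : fitting th Q).

Lemma proj_im_bezout x : proj_im Q th x = piW x + pe (a * Q) (x - piW x).
Proof.
set k := x - piW x; apply: proj_im_unique => //.
  apply: inImD; first by apply: inIm_dvd (pi_Im_in x); rewrite -QRE dvdp_mulr.
  by exists (pe a k); rewrite -pevalM mulrC.
have -> : x - (piW x + pe (a * Q) k) = pe (b * R) k.
  have kE : k = pe (a * Q) k + pe (b * R) k by rewrite -pevalD abQR peval1.
  by rewrite opprD addrA -/k {1}kE addrC addKr.
by rewrite -pevalM mulrCA QRE pevalM pi_Im_ker linear0.
Qed.

Lemma normal_form_proj_im : normal_form (proj_im Q th) 1 1 (a * Q).
Proof. by move=> x; rewrite proj_im_bezout peval1 inv_eval1 //; apply: pi_Im_in. Qed.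

End Bezout.

Lemma normal_form_inv_eval e R a b c d : adm e ->
  powC C (Fac e) * R = P -> a * powC C (Fac e) + b * R = 1 -> c * e + d * R = 1 ->
  normal_form (inv_eval C e th) 1 e (c * a * powC C (Fac e)).
Proof.
move=> eF QRE abQR cdeR x; set Q := powC C (Fac e) in QRE abQR *; set k := x - piW x.
have [_ FacP] := Fac_spec (monic_neq0 eF.1).
have fitQ : fitting th Q.
  by apply: fitting_powC => // g /FacP [mg ge]; split=> //; apply: admissible_finite eF g mg ge.
have [Wu eu] := inv_evalP eF (pi_Im_in x).
rewrite peval1; apply: inv_eval_unique => //; first exact: eF.1.
- exact: admissible_finite.
- apply: inImD; first by apply: inIm_dvd Wu; rewrite -QRE dvdp_mulr.
  by exists (pe (c * a) k); rewrite -pevalM mulrC.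
rewrite /pi_Im (proj_im_bezout QRE abQR fitQ) linearD /= eu -pevalM; congr (_ + _).
have ceE : c * e = 1 - d * R by rewrite -cdeR addrK.
have -> : e * (c * a * Q) = a * Q - d * a * P.
  have -> : e * (c * a * Q) = c * e * (a * Q) by ring.
  by rewrite ceE -QRE; ring.
by rewrite pevalD pevalN [pe (_ * P) _]pevalM pi_Im_ker linear0 subr0.
Qed.

End Decomposition.

Section KernelDecomposition.
Variables (K : fieldType) (C : kconf K) (V : lmodType K) (th : {linear V -> V}).
Hypotheses (wfC : kconf_wf C) (thC : C_img_complete C th).
Implicit Types p q s f g : {poly K}.
Local Notation pe p := (peval p th).

Lemma powC1 f : powC C [:: f] = f ^+ Cn C f.
Proof. by rewrite /powC big_seq1. Qed.

Lemma fitting_powC1 f c : mirr f -> Cval C f = Some c -> fitting th (powC C [:: f]).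
Proof.
by move=> mf fc; apply: fitting_powC => // g; rewrite inE => /eqP ->; split=> //; exists c.
Qed.

Lemma pi_Ker_Im f c x : mirr f -> Cval C f = Some c ->
  inIm th (powC C [:: f]) x -> pi_Ker C [:: f] th x = 0.
Proof.
by move=> mf fc fx; rewrite /pi_Ker /pi_Im proj_im_id ?subrr //; apply: fitting_powC1 fc.
Qed.

Lemma pi_KerD f c x y : mirr f -> Cval C f = Some c ->
  pi_Ker C [:: f] th (x + y) = pi_Ker C [:: f] th x + pi_Ker C [:: f] th y.
Proof.
move=> mf fc; rewrite /pi_Ker /pi_Im proj_imD; last exact: fitting_powC1 fc.
by rewrite opprD addrACA.
Qed.

Lemma pi_Ker_id f c y : mirr f -> Cval C f = Some c ->
  pe (f ^+ Cn C f) y = 0 -> pi_Ker C [:: f] th y = y.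
Proof.
by move=> mf fc fy; rewrite /pi_Ker /pi_Im (proj_im_ker (fitting_powC1 mf fc)) ?subr0 ?powC1.
Qed.

Lemma pi_Ker_ker f c x : mirr f -> Cval C f = Some c ->
  pe (f ^+ Cn C f) (pi_Ker C [:: f] th x) = 0.
Proof. by move=> mf fc; rewrite -powC1; exact: (proj_imP (fitting_powC1 mf fc) x).2. Qed.

(* Chinese remainder theorem for the pairwise coprime factors [f^C(f)] of [L^C]. *)
Lemma pi_Ker_sum L k : uniq L -> (forall f, f \in L -> mirr f /\ exists c, Cval C f = Some c) ->
  pe (powC C L) k = 0 -> k = \sum_(f <- L) pi_Ker C [:: f] th k.
Proof.
elim: L k => [|f L IH] k; first by rewrite /powC !big_nil peval1.
rewrite cons_uniq => /andP [fNL uL] LC Lk; rewrite big_cons.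
have LCL g : g \in L -> mirr g /\ exists c, Cval C g = Some c.
  by move=> gL; apply: LC; rewrite inE gL orbT.
have {}IH := IH _ uL LCL.
have [mf [c fc]] := LC f (mem_head _ _).
set Q := powC C L; set qf := f ^+ Cn C f.
have fLE : powC C (f :: L) = qf * Q by rewrite /powC big_cons.
have [[a b] /= abE] : exists uv : {poly K} * {poly K}, uv.1 * qf + uv.2 * Q = 1.
  apply/Bezout_eq1_coprimepP/coprimep_expl/coprimep_prodr => g gL _.
  apply/coprimep_expr/mirr_coprime => //; first by case: (LCL g gL).
  by apply: contraNneq fNL => ->.
set k1 := pe (a * qf) k; set k2 := pe (b * Q) k.
have kE : k = k1 + k2 by rewrite -pevalD abE peval1.
have k1Q : pe Q k1 = 0.
  by rewrite /k1 -pevalM mulrCA [Q * qf]mulrC -fLE pevalM Lk linear0.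
have k2qf : pe qf k2 = 0.
  by rewrite /k2 -pevalM mulrCA -fLE pevalM Lk linear0.
have piKg g : g \in L -> pi_Ker C [:: g] th k = pi_Ker C [:: g] th k1.
  move=> gL; have [mg [cg gc]] := LCL g gL.
  rewrite {1}kE (pi_KerD _ _ mg gc) (@pi_Ker_Im g cg k2) ?addr0 //.
  by apply: (inIm_dvd (Q := b * Q)); [rewrite powC1 dvdp_mull ?dvdp_powC|exists k].
have k1f : inIm th (powC C [:: f]) k1 by exists (pe a k); rewrite -pevalM mulrC powC1.
rewrite (eq_big_seq _ piKg) -(IH k1 k1Q) {2}kE (pi_KerD _ _ mf fc) (pi_Ker_id mf fc k2qf).
by rewrite (pi_Ker_Im mf fc k1f) add0r addrC.
Qed.

Lemma peval_ker_part F s x : fin_sub_irr C F ->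
  pe s (x - pi_Im C F th x) = \sum_(f <- F) pe (s %% f ^+ Cn C f) (pi_Ker C [:: f] th x).
Proof.
move=> FC; have FCfin f : f \in F -> mirr f /\ exists c, Cval C f = Some c.
  by case/FC.2=> mf [c fc]; split=> //; exists c.+1.
rewrite {1}(pi_Ker_sum FC.1 FCfin (pi_Im_ker wfC thC FC x)) linear_sum /=.
apply: eq_big_seq => f fF; have [mf [c fc]] := FC.2 f fF.
have -> : pi_Ker C [:: f] th (x - pi_Im C F th x) = pi_Ker C [:: f] th x.
  rewrite (pi_KerD _ _ mf fc) (pi_Ker_Im mf fc (_ : inIm _ _ (- pi_Im C F th x))) ?addr0 //.
  by apply/inImN/(inIm_dvd _ (pi_Im_in wfC thC FC x)); rewrite powC1 dvdp_powC.
by rewrite {1}(divp_eq s (f ^+ Cn C f)) pevalD pevalM (pi_Ker_ker _ mf fc) linear0 add0r.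
Qed.

End KernelDecomposition.

(** * Normal forms of the elements of R_C *)

Lemma cat_subset (T : eqType) (s1 s2 s : seq T) :
  {subset s1 ++ s2 <= s} -> {subset s1 <= s} /\ {subset s2 <= s}.
Proof. by move=> s12s; split=> x xs; apply: s12s; rewrite mem_cat xs ?orbT. Qed.

Section Terms.
Variables (K : fieldType) (C : kconf K).
Implicit Types p q e f g : {poly K}.

Fixpoint rfrac (t : rterm K) : {poly K} * {poly K} :=
  match t with
  | RPoly p => (p, 1)
  | RProjIm _ => (1, 1)
  | RInv e => (1, e)
  | RAdd t1 t2 => ((rfrac t1).1 * (rfrac t2).2 + (rfrac t2).1 * (rfrac t1).2,
                   (rfrac t1).2 * (rfrac t2).2)
  | RComp t1 t2 => ((rfrac t1).1 * (rfrac t2).1, (rfrac t1).2 * (rfrac t2).2)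
  end.

Definition Cpos f : bool := if Cval C f is Some _.+1 then true else false.

Lemma CposP f : reflect (exists k, Cval C f = Some k.+1) (Cpos f).
Proof.
by rewrite /Cpos; case: (Cval C f) => [[|k]|]; [right; case|left; exists k|right; case].
Qed.

Definition Cpos_factors p : seq {poly K} :=
  if p == 0 then [::] else [seq f <- Fac p | Cpos f].

Lemma mem_Cpos_factors p f : f \in Cpos_factors p <->
  [/\ p != 0, mirr f, f %| p & exists k, Cval C f = Some k.+1].
Proof.
rewrite /Cpos_factors; have [->|p0] := eqVneq p 0; first by split=> // -[].
have FacP := (Fac_spec p0).2; rewrite mem_filter; split.
  by case/andP=> /CposP fk /FacP [mf fp].
by case=> _ mf fp fk; apply/andP; split; [apply/CposP|apply/FacP].
Qed.

Fixpoint rsupport (t : rterm K) : seq {poly K} :=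
  match t with
  | RPoly _ => [::]
  | RProjIm F => F
  | RInv e => Cpos_factors e
  | RAdd t1 t2 | RComp t1 t2 => rsupport t1 ++ rsupport t2
  end.

Lemma rsupport_valid t : rvalid C t ->
  forall f, f \in rsupport t -> mirr f /\ exists k, Cval C f = Some k.+1.
Proof.
elim: t => [p|F|e|t1 IH1 t2 IH2|t1 IH1 t2 IH2] //=.
- by move=> FC f /FC.2.
- by move=> _ f /mem_Cpos_factors [].
- by move=> [v1 v2] f; rewrite mem_cat => /orP [/(IH1 v1)|/(IH2 v2)].
- by move=> [v1 v2] f; rewrite mem_cat => /orP [/(IH1 v1)|/(IH2 v2)].
Qed.

Lemma rfrac_admissible F t : rvalid C t -> {subset rsupport t <= F} ->
  admissible C F (rfrac t).2.
Proof.
elim: t => [p|F'|e|t1 IH1 t2 IH2|t1 IH1 t2 IH2] /=; try exact: (fun _ _ => admissible1 C F).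
- move=> [me eC] eF; split=> // f mf fe.
  have [[|k] fk] := eC f mf fe; [by right|left; apply/eF/mem_Cpos_factors].
  by split=> //; [exact: monic_neq0|exists k].
- by move=> [v1 v2] /cat_subset [tF1 tF2]; apply: admissibleM; [apply: IH1|apply: IH2].
- by move=> [v1 v2] /cat_subset [tF1 tF2]; apply: admissibleM; [apply: IH1|apply: IH2].
Qed.

Lemma rterm_normal_form F t : kconf_wf C -> fin_sub_irr C F -> rvalid C t ->
  {subset rsupport t <= F} ->
  exists s, forall (V : lmodType K) (th : {linear V -> V}), C_img_complete C th ->
    normal_form C th F (rinterp C th t) (rfrac t).1 (rfrac t).2 s.
Proof.
move=> wfC FC; have mF g : g \in F -> mirr g by case/FC.2.
elim: t => [p|F'|e|t1 IH1 t2 IH2|t1 IH1 t2 IH2] /=.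
- by exists p => V th thC; apply: normal_form_peval.
- move=> F'C F'F; have F'FE := powC_split (C := C) F'C.1 FC.1 (fun g gF' _ => F'F g gF').
  have [[a b] /= abE] := Bezout_eq1_coprimepP _ _
    (coprimep_powC_compl C (fun g gF' => (F'C.2 g gF').1) mF).
  exists (a * powC C F') => V th thC.
  apply: (normal_form_proj_im wfC thC FC (esym F'FE) abE).
  by apply: fitting_powC => // g /F'C.2 [mg [k gk]]; split=> //; exists k.+1.
- move=> [me eC] eF; have [uFac FacP] := Fac_spec (monic_neq0 me).
  have FacF g : g \in Fac e -> Cn C g != 0%N -> g \in F.
    move=> /FacP [mg ge]; have [[|k] gk] := eC g mg ge; first by rewrite (Cn_some gk).
    by move=> _; apply/eF/mem_Cpos_factors; split=> //; [exact: monic_neq0|exists k].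
  have eFE := powC_split (C := C) uFac FC.1 FacF.
  have [[a b] /= abE] := Bezout_eq1_coprimepP _ _
    (coprimep_powC_compl C (fun g gFac => ((FacP g).1 gFac).1) mF).
  have [[c d] /= cdE] : exists uv : {poly K} * {poly K},
      uv.1 * e + uv.2 * \prod_(g <- F | g \notin Fac e) g ^+ Cn C g = 1.
    apply/Bezout_eq1_coprimepP/coprimep_prodr => g gF gNe; apply/coprimep_expr.
    rewrite coprimep_sym irreducible_poly_coprime; last by case: (FC.2 g gF) => [[]].
    by apply: contra gNe => ge; apply/FacP; split=> //; apply: mF.
  have eadm : admissible C F e := rfrac_admissible (t := RInv e) (conj me eC) eF.
  exists (c * a * powC C (Fac e)) => V th thC.
  exact: (normal_form_inv_eval wfC thC FC eadm (esym eFE) abE cdE).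
- move=> [v1 v2] /cat_subset [tF1 tF2].
  have [[s1 r1E] [s2 r2E]] := (IH1 v1 tF1, IH2 v2 tF2).
  exists (s1 + s2) => V th thC.
  exact: (normal_formD wfC thC FC (rfrac_admissible v1 tF1) (rfrac_admissible v2 tF2)
           (r1E V th thC) (r2E V th thC)).
- move=> [v1 v2] /cat_subset [tF1 tF2].
  have [[s1 r1E] [s2 r2E]] := (IH1 v1 tF1, IH2 v2 tF2).
  exists (s1 * s2) => V th thC.
  exact: (normal_form_comp wfC thC FC (rfrac_admissible v1 tF1) (rfrac_admissible v2 tF2)
           (r1E V th thC) (r2E V th thC)).
Qed.

End Terms.

Section LowestTerms.
Variables (K : fieldType) (C : kconf K) (F : seq {poly K}).
Implicit Types e f g E : {poly K}.

Lemma dvdp_biggcdp (I : eqType) (s : seq I) (A : I -> {poly K}) j :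
  j \in s -> \big[@gcdp K/0]_(i <- s) A i %| A j.
Proof.
elim: s => // i s IH; rewrite in_cons big_cons => /orP [/eqP <-|js].
  exact: dvdp_gcdl.
exact: dvdp_trans (dvdp_gcdr _ _) (IH js).
Qed.

Lemma lowest_terms n (a b : 'I_n -> {poly K}) : (forall i, admissible C F (b i)) ->
  exists A E, [/\ admissible C F E, forall i, a i * E = A i * b i &
                  gcdp (\big[@gcdp K/0]_(i < n) A i) E %= 1].
Proof.
move=> bF; suff reduce m E (A : 'I_n -> {poly K}) :
    (size E <= m)%N -> admissible C F E -> (forall i, a i * E = A i * b i) ->
    exists A E, [/\ admissible C F E, forall i, a i * E = A i * b i &
                    gcdp (\big[@gcdp K/0]_(i < n) A i) E %= 1].
  pose E0 := \prod_(i < n) b i; apply: (reduce _ E0 (fun i => a i * (E0 %/ b i)) (leqnn _)).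
    by apply: big_ind => //; [exact: admissible1|exact: admissibleM].
  by move=> i; rewrite -mulrA divpK // /E0 (bigD1 i) //= dvdp_mulr.
elim: m E A => [|m IH] E A sE EF aE.
  by move: sE; rewrite leqn0 size_poly_eq0 (negPf (monic_neq0 EF.1)).
have [g1|gN1] := boolP (gcdp (\big[@gcdp K/0]_(i < n) A i) E %= 1); first by exists A, E.
set g := gcdp _ E in gN1.
have E0 := monic_neq0 EF.1.
have g0 : g != 0 by rewrite gcdp_eq0 negb_and E0 orbT.
have [f [mf fg]] : exists f, mirr f /\ f %| g.
  apply: exists_mirr_dvdp; move: gN1 g0.
  by rewrite -size_poly_eq1 -size_poly_gt0; case: (size g) => [|[]].
have fE : f %| E by apply: dvdp_trans fg (dvdp_gcdr _ _).
have fA i : f %| A i.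
  by apply: dvdp_trans fg (dvdp_trans (dvdp_gcdl _ _) (dvdp_biggcdp _ (mem_index_enum i))).
apply: (IH (E %/ f) (fun i => A i %/ f)).
- by rewrite -ltnS (leq_trans _ sE) // size_divp_mirr.
- exact: admissible_divp.
move=> i; apply: (mulIf (mirr_neq0 mf)).
by rewrite -mulrA divpK // aE mulrAC divpK.
Qed.

Lemma lowest_terms_numerator a b A E f : {subset Cpos_factors C a <= F} ->
  admissible C F b -> admissible C F E -> a * E = A * b -> A != 0 -> mirr f -> f %| A ->
  [\/ f \in F, Cval C f = Some 0%N | Cval C f = None].
Proof.
move=> aF bF EF aEAb A0 mf fA; have : f %| a * E by rewrite aEAb dvdp_mulr.
case/(mirr_dvdM mf) => [fa|/(EF.2 f mf) []]; [|by constructor 1|by constructor 2].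
case fC : (Cval C f) => [[|k]|]; [by constructor 2|constructor 1|by constructor 3].
apply/aF/mem_Cpos_factors; split=> //; last by exists k.
apply: contraNneq A0 => a0.
by move/esym/eqP: aEAb; rewrite a0 mul0r mulf_eq0 (negPf (monic_neq0 bF.1)) orbF.
Qed.

End LowestTerms.

Definition decomposition_support (K : fieldType) (C : kconf K) (F0 : seq {poly K}) n
    (r : 'I_n -> rterm K) : seq {poly K} :=
  undup (F0 ++ flatten [seq rsupport C (r i) ++ Cpos_factors C (rfrac (r i)).1 | i <- enum 'I_n]).

Section DecompositionSupport.
Variables (K : fieldType) (C : kconf K) (F0 : seq {poly K}) (n : nat) (r : 'I_n -> rterm K).
Local Notation F := (decomposition_support C F0 r).

Lemma mem_decomposition_support f : f \in F =
  (f \in F0) || [exists i, (f \in rsupport C (r i)) || (f \in Cpos_factors C (rfrac (r i)).1)].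
Proof.
rewrite mem_undup mem_cat; congr (_ || _); apply/flatten_mapP/existsP => [[i _]|[i]].
  by rewrite mem_cat; exists i.
by rewrite -mem_cat; exists i; rewrite ?mem_enum.
Qed.

Lemma decomposition_support_F0 : {subset F0 <= F}.
Proof. by move=> f f0; rewrite mem_decomposition_support f0. Qed.

Lemma decomposition_support_rsupport i : {subset rsupport C (r i) <= F}.
Proof.
move=> f fr; rewrite mem_decomposition_support; apply/orP; right.
by apply/existsP; exists i; rewrite fr.
Qed.

Lemma decomposition_support_numerator i : {subset Cpos_factors C (rfrac (r i)).1 <= F}.
Proof.
move=> f fa; rewrite mem_decomposition_support; apply/orP; right.
by apply/existsP; exists i; rewrite fa orbT.
Qed.

Lemma decomposition_support_valid : fin_sub_irr C F0 -> (forall i, rvalid C (r i)) ->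
  fin_sub_irr C F.
Proof.
move=> F0C rC; split=> [|f]; first exact: undup_uniq.
rewrite mem_decomposition_support => /orP [/F0C.2 //|/existsP [i /orP [/rsupport_valid|]]].
  exact.
by case/mem_Cpos_factors.
Qed.

End DecompositionSupport.

Theorem theorem3p25 (K : fieldType) (C : kconf K) (n : nat)
    (r : 'I_n -> rterm K) (F0 : seq {poly K}) :
  kconf_wf C ->
  (forall i, rvalid C (r i)) ->
  fin_sub_irr C F0 ->
  exists (F : seq {poly K}) (eta : {poly K}) (rhoF : 'I_n -> {poly K})
         (rhof : {poly K} -> 'I_n -> {poly K}),
    [/\ (* (1) *) fin_sub_irr C F /\ {subset F0 <= F},
        (* (2) *) eta \is monic /\
          (forall f, mirr f -> f %| eta -> f \in F \/ Cval C f = Some 0%N),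
        (* (3) *) (forall i f, mirr f -> rhoF i != 0 -> f %| rhoF i ->
            [\/ f \in F, Cval C f = Some 0%N | Cval C f = None]) /\
          gcdp (\big[@gcdp K/0]_(i < n) rhoF i) eta %= 1,
        (* (4) *) (forall f i, f \in F -> (size (rhof f i) < size (f ^+ Cn C f))%N)
      & forall (V : lmodType K) (th : {linear V -> V}),
          C_img_complete C th ->
          forall i x,
            rinterp C th (r i) x =
              peval (rhoF i) th (inv_eval C eta th (pi_Im C F th x)) +
              \sum_(f <- F) peval (rhof f i) th (pi_Ker C [:: f] th x)].
Proof.
move=> wfC rC F0C; set F := decomposition_support C F0 r.
have FC : fin_sub_irr C F := decomposition_support_valid F0C rC.
have rF := @decomposition_support_rsupport _ C F0 _ r.
have aF := @decomposition_support_numerator _ C F0 _ r.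
have bF i := rfrac_admissible (rC i) (rF i).
have [A [E [EF aEAb gcd1]]] := lowest_terms (fun i => (rfrac (r i)).1) bF.
have [s rE] := fin_all_exists (fun i => rterm_normal_form wfC FC (rC i) (rF i)).
exists F, E, A, (fun f i => s i %% f ^+ Cn C f); split=> //.
- by split=> //; apply: decomposition_support_F0.
- by split=> // i f mf A0 fA; apply: lowest_terms_numerator (aF i) (bF i) EF (aEAb i) A0 mf fA.
- by move=> f i /FC.2 [mf _]; rewrite ltn_modp expf_neq0 ?mirr_neq0.
move=> V th thC i x; rewrite (rE i V th thC x) (peval_ker_part wfC thC _ _ FC).
by rewrite (inv_eval_cross wfC thC FC (bF i) EF (aEAb i)) //; apply: pi_Im_in.
Qed.
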